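(* Consider a PWA system, as defined in the context, satisfying (A1)–(A5). Then its global dynamical relative degree equals $1$ if and only if the common relative degree of all component models is $\mu_c=1$.
   Context: A discrete-time piecewise affine (PWA) system is $x_{k+1}=\mathbf{A}_k x_k+\mathbf{B}_k u_k+\mathbf{F}_k$, $y_k=\mathbf{C}_k x_k+\mathbf{D}_k u_k+\mathbf{G}_k$, $k\in\mathbb{Z}$, with state $x_k\in\mathbb{R}^{n_x}$, input $u_k\in\mathbb{R}^{n_u}$, output $y_k\in\mathbb{R}^{n_y}$. For each $M\in\{A,B,F,C,D,G\}$, $\mathbf{M}_k=\sum_{q=1}^{|Q|} M_{q,k}K_q(\delta_k)$, where the $M_{q,k}$ are real matrices (possibly time-varying), $\delta_k=\delta(x_k)=H(Px_k-\theta)$ with $H$ the elementwise Heaviside step function, $P\in\mathbb{R}^{n_P\times n_x}$, $\theta\in\mathbb{R}^{n_P}$, and $K_q(\delta)=1$ if $\delta\in\Delta^*_q$ and $0$ otherwise ($\Delta^*_q$ a set of binary vectors). The locations $Q_q=\{x:\delta(x)\in\Delta^*_q\}$ are disjoint, have union $\mathbb{R}^{n_x}$, and each is a union of disjoint convex polytopes. The $q$-th component model is the affine system with matrices $A_{q,k},\dots,G_{q,k}$ and relative degree $\mu_q$ (number of time steps for an input value to influence the output). Global dynamical relative degree: the smallest integer $\mu\ge 0$ such that the explicit expression of $y_{k+\mu}$ in terms of the component matrices, the selector functions $K_q$, $x_k$ and $u_i$ ($i\ge k$) contains $u_k$ outside of a selector function for every switching sequence on time steps $k,\dots,k+\mu$.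 Assumptions: (A1) $x_0$ lies in the set of initial conditions from which every location is reachable in finite time; (A2) single-input single-output; (A3) switching depends only on the state, not the input; (A4) all component models have the same relative degree $\mu_c$ for all $q$ and $k$; (A5) location-invariant output function: $\mathbf{C}_k=C_k$, $\mathbf{D}_k=D_k$, $\mathbf{G}_k=G_k$, where $C_k,D_k,G_k$ may vary with time but are identical for all locations $q$ and are known for all $k$. *)

From HB Require Import structures.
From mathcomp Require Import all_boot all_order all_algebra.
Set Implicit Arguments. Unset Strict Implicit. Unset Printing Implicit Defensive.
Import Order.TTheory GRing.Theory Num.Theory.
Local Open Scope ring_scope.

Record pwa (R : realFieldType) (nx nu ny nP nQ : nat) := PWA {
  pA : 'I_nQ -> int -> 'M[R]_nx;
  pB : 'I_nQ -> int -> 'M[R]_(nx, nu);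
  pF : 'I_nQ -> int -> 'cV[R]_nx;
  pC : 'I_nQ -> int -> 'M[R]_(ny, nx);
  pD : 'I_nQ -> int -> 'M[R]_(ny, nu);
  pG : 'I_nQ -> int -> 'cV[R]_ny;
  pP : 'M[R]_(nP, nx);
  ptheta : 'cV[R]_nP;
  pDelta : 'I_nQ -> {set {ffun 'I_nP -> bool}}
}.

Section PWA.
Variables (R : realFieldType) (nx nu ny nP nQ : nat).
Variable S : pwa R nx nu ny nP nQ.

Definition heaviside (z : R) : bool := 0 <= z.

Definition delta (x : 'cV[R]_nx) : {ffun 'I_nP -> bool} :=
  [ffun i => heaviside ((pP S *m x - ptheta S) i 0)].

Definition Ksel (q : 'I_nQ) (d : {ffun 'I_nP -> bool}) : R :=
  (d \in pDelta S q)%:R.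

Definition location (q : 'I_nQ) (x : 'cV[R]_nx) : Prop := delta x \in pDelta S q.

Definition locations_partition : Prop :=
  forall x : 'cV[R]_nx, exists! q : 'I_nQ, location q x.

Definition selA k x := \sum_(q < nQ) Ksel q (delta x) *: pA S q k.
Definition selB k x := \sum_(q < nQ) Ksel q (delta x) *: pB S q k.
Definition selF k x := \sum_(q < nQ) Ksel q (delta x) *: pF S q k.

Definition pwa_step (k : int) (x : 'cV[R]_nx) (u : 'cV[R]_nu) : 'cV[R]_nx :=
  selA k x *m x + selB k x *m u + selF k x.

Fixpoint pwa_traj (x0 : 'cV[R]_nx) (u : int -> 'cV[R]_nu) (n : nat) : 'cV[R]_nx :=
  match n with
  | 0 => x0
  | n'.+1 => pwa_step n'%:Z (pwa_traj x0 u n') (u n'%:Z)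
  end.

Definition all_locations_reachable (x0 : 'cV[R]_nx) : Prop :=
  forall q : 'I_nQ, exists (u : int -> 'cV[R]_nu) (n : nat),
    location q (pwa_traj x0 u n).

Definition location_invariant_output : Prop :=
  forall (q q' : 'I_nQ) (k : int),
    [/\ pC S q k = pC S q' k, pD S q k = pD S q' k & pG S q k = pG S q' k].

(* Explicit dynamics for a fixed switching sequence s (location s t active
   at time t), started at time k in state x, with inputs u. *)
Fixpoint sw_state (s : int -> 'I_nQ) (k : int) (x : 'cV[R]_nx)
    (u : int -> 'cV[R]_nu) (j : nat) : 'cV[R]_nx :=
  match j with
  | 0 => x
  | j'.+1 => let t := k + j'%:Z in
      pA S (s t) t *m sw_state s k x u j' + pB S (s t) t *m u t + pF S (s t) t
  end.

Definition sw_out (s : int -> 'I_nQ) (k : int) (x : 'cV[R]_nx)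
    (u : int -> 'cV[R]_nu) (j : nat) : 'cV[R]_ny :=
  let t := k + j%:Z in
  pC S (s t) t *m sw_state s k x u j + pD S (s t) t *m u t + pG S (s t) t.

(* the expression of y_{k+m} under switching sequence s contains u_k,
   i.e. u_k influences y_{k+m} *)
Definition input_influences (s : int -> 'I_nQ) (k : int) (m : nat) : Prop :=
  exists (x : 'cV[R]_nx) (u u' : int -> 'cV[R]_nu),
    (forall t, t != k -> u' t = u t) /\ sw_out s k x u m != sw_out s k x u' m.

Definition comp_reldeg (q : 'I_nQ) (k : int) (mu : nat) : Prop :=
  input_influences (fun _ => q) k mu /\
  forall m, (m < mu)%N -> ~ input_influences (fun _ => q) k m.

Definition global_reldeg (mu : nat) : Prop :=
  (forall k s, input_influences s k mu) /\
  forall m, (m < mu)%N -> ~ (forall k s, input_influences s k m).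

End PWA.

(** With a location-invariant output function the output [y_(k+m)] depends on
    the switching sequence only through the locations active at times
    [k, ..., k+m-1]; for [m <= 1] that is at most the location active at time
    [k].  Hence, for [m <= 1], [u_k] appears in [y_(k+m)] under every switching
    sequence exactly when it does so under every constant one, i.e. for every
    component model.  Since [muc] is the least step at which [u_k] appears in
    the output of a component model, the global relative degree is [1] exactly
    when [muc = 1]. *)

From mathcomp Require Import all_boot all_order all_algebra.
Set Implicit Arguments. Unset Strict Implicit. Unset Printing Implicit Defensive.
Import Order.TTheory GRing.Theory Num.Theory.
Local Open Scope ring_scope.

Section SwitchedOutput.
Variables (R : realFieldType) (nx nu ny nP nQ : nat).
Variable S : pwa R nx nu ny nP nQ.

Definition agree_on_window (s s' : int -> 'I_nQ) (k : int) (m : nat) :=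
  forall i : nat, (i < m)%N -> s (k + i%:Z) = s' (k + i%:Z).

Lemma sw_state_eq s s' k x u j :
  agree_on_window s s' k j -> sw_state S s k x u j = sw_state S s' k x u j.
Proof.
elim: j => [|j IHj] //= eq_ss'.
rewrite IHj => [|i lt_ij]; last exact/eq_ss'/ltnW.
by rewrite eq_ss'.
Qed.

Hypothesis outS : location_invariant_output S.

Lemma sw_out_eq s s' k x u m :
  agree_on_window s s' k m -> sw_out S s k x u m = sw_out S s' k x u m.
Proof.
move=> eq_ss'; rewrite /sw_out (sw_state_eq x u eq_ss').
by have [-> -> ->] := outS (s (k + m%:Z)) (s' (k + m%:Z)) (k + m%:Z).
Qed.

Lemma input_influences_eq s s' k m :
  agree_on_window s s' k m ->
  input_influences S s k m -> input_influences S s' k m.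
Proof.
move=> eq_ss' [x [u [u' [eq_uu' neq_y]]]].
by exists x, u, u'; rewrite -!(sw_out_eq _ _ eq_ss').
Qed.

Lemma input_influences_component s k m : (m <= 1)%N ->
  input_influences S (fun=> s k) k m -> input_influences S s k m.
Proof.
move=> le_m1; apply: input_influences_eq => i lt_im.
case: i lt_im => [_|i /leq_trans/(_ le_m1)] //.
by rewrite addr0.
Qed.

Lemma input_influences_uniform m : (m <= 1)%N ->
  (forall q k, input_influences S (fun=> q) k m) ->
  forall k s, input_influences S s k m.
Proof. by move=> le_m1 infl_q k s; apply: input_influences_component. Qed.

End SwitchedOutput.

Lemma comp_reldeg_le (R : realFieldType) (nx nu ny nP nQ : nat)
    (S : pwa R nx nu ny nP nQ) q k mu m :
  comp_reldeg S q k mu -> input_influences S (fun=> q) k m -> (mu <= m)%N.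
Proof. by move=> [_ not_infl] infl_m; rewrite leqNgt; apply/negP => /not_infl. Qed.

Theorem lemma3 (R : realFieldType) (nx nu ny nP nQ : nat)
  (S : pwa R nx nu ny nP nQ) (x0 : 'cV[R]_nx) (muc : nat) :
  locations_partition S ->
  all_locations_reachable S x0 ->                 (* (A1) *)
  nu = 1%N -> ny = 1%N ->                         (* (A2) *)
  (forall (q : 'I_nQ) (k : int), comp_reldeg S q k muc) -> (* (A4) *)
  location_invariant_output S ->                  (* (A5) *)
  (global_reldeg S 1 <-> muc = 1%N).
Proof.
move=> partS _ _ _ reldegS outS.
have [q0 _] := partS 0.
split=> [[infl1 not_infl0] | muc1].
- apply/eqP; rewrite eqn_leq (comp_reldeg_le (reldegS q0 0) (infl1 0 _)) lt0n.
  apply/eqP => muc0; apply: (not_infl0 0%N isT).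
  by apply: input_influences_uniform => // q k; rewrite -muc0; apply: (reldegS q k).1.
- subst muc; split=> [|[|m] // _ infl0].
    by apply: input_influences_uniform => // q k; apply: (reldegS q k).1.
  by have := comp_reldeg_le (reldegS q0 0) (infl0 0 _).
Qed.
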